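(* For every lattice tree automaton $\mathcal{A}$, $\mathcal{L}(\mathcal{A})\subseteq\mathcal{L}(eval(\mathcal{A}))$.
   Context: Lattice tree automaton (LTA) $\mathcal{A}=\langle\mathcal{F},\mathcal{Q},\mathcal{Q}_f,\Delta\rangle$ over an atomic lattice $\Lambda$: alphabet $\mathcal{F}=\mathcal{F}_\circ\cup\mathcal{F}_\bullet^{\#}$ where $\mathcal{F}_\circ$ are passive symbols and $\mathcal{F}_\bullet^{\#}=\Lambda\cup OP^{\#}\cup\{\sqcup,\sqcap\}$ are interpreted symbols, with an evaluation function $eval$ mapping terms over interpreted symbols to $\Lambda$; finite states, final states $\mathcal{Q}_f$, normalized transitions $f(q_1,\dots,q_n)\to q$ including lambda transitions $\lambda\to q$, $\lambda\in\Lambda$. Runs and the language $\mathcal{L}(\mathcal{A})$ are as usual for LTA: a term $t$ (over passive symbols, operations and atoms of $\Lambda$) is accepted if some $t'\sqsupseteq t$ reduces to a final state, where subterms over interpreted symbols with evaluation $\sqsubseteq\lambda$ may be reduced to $q$ when $\lambda\to q\in\Delta$. $propag$: for a transition set $\Delta$, whenever $f(q_1,\dots,q_k)\to q\in\Delta$ with $f$ an interpreted operation of arity $k$ and $\lambda_1\to^*_\Delta q_1,\dots,\lambda_k\to^*_\Delta q_k$ with $\lambda_i\in\Lambda$: if there is already $\lambda\to q\in\Delta$ with $eval(f(\lambda_1,\dots,\lambda_k))\sqsubseteq\lambda$, nothing is added; otherwise $propag(\Delta)=\Delta\cup\{eval(f(\lambda_1,\dots,\lambda_k))\to q\}$. Then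 $eval(\Delta)=\mu X.\,propag(X)\cup\Delta$ (least fixpoint obtained by iterating $propag$) and $eval(\mathcal{A})=\langle\mathcal{F},\mathcal{Q},\mathcal{Q}_f,eval(\Delta)\rangle$. *)

From HB Require Import structures.
From mathcomp Require Import all_boot all_order.
From Stdlib Require Import Relations.
From Stdlib Require List.
Set Implicit Arguments. Unset Strict Implicit. Unset Printing Implicit Defensive.
Import Order.TTheory.
Local Open Scope order_scope.

Section LTA.
Context {disp : Order.disp_t} (L : bLatticeType disp).

Definition is_atom (a : L) : Prop :=
  a <> \bot /\ forall b : L, b <= a -> b = \bot \/ b = a.
Definition atomic : Prop :=
  forall a : L, a <> \bot -> exists b, is_atom b /\ b <= a.

(** Alphabet: passive symbols P with arities arP, interpreted operations OP^# = O
    with arities arO and interpretation interp, join, meet, and lattice elements. *)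
Context (P O : Type) (arP : P -> nat) (arO : O -> nat) (interp : O -> seq L -> L).

Inductive sym := SP of P | SO of O | SJoin | SMeet | SL of L.

Definition arity (f : sym) : nat :=
  match f with SP p => arP p | SO o => arO o | SJoin | SMeet => 2 | SL _ => 0 end.

Definition interp_op (f : sym) : bool :=
  match f with SO _ | SJoin | SMeet => true | _ => false end.

Context (Q : finType).

(** Terms over F ∪ Q (configurations); ground terms contain no St. *)
Inductive term := Node of sym & seq term | St of Q.

Definition leaf (l : L) : term := Node (SL l) [::].

Fixpoint wf_term (t : term) : bool :=
  match t with
  | Node f ts => (size ts == arity f) && all wf_term ts
  | St _ => true
  end.

Fixpoint interp_term (t : term) : bool :=
  match t with
  | Node f ts => (match f with SP _ => false | _ => true end) && all interp_term ts
  | St _ => false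
  end.

Fixpoint evalt (t : term) : L :=
  match t with
  | Node (SL l) _ => l
  | Node SJoin (a :: b :: _) => evalt a `|` evalt b
  | Node SMeet (a :: b :: _) => evalt a `&` evalt b
  | Node (SO o) ts => interp o (map evalt ts)
  | _ => \bot
  end.

Fixpoint atoms_term (t : term) : Prop :=
  match t with
  | Node (SP _) ts | Node (SO _) ts =>
      (fix go (s : seq term) : Prop :=
         match s with [::] => True | u :: s' => atoms_term u /\ go s' end) ts
  | Node (SL a) ts => is_atom a /\ ts = [::]
  | Node SJoin _ | Node SMeet _ => False
  | St _ => False
  end.

Fixpoint tle (t u : term) : Prop :=
  match t, u with
  | Node f ts, Node g us =>
      (f = g \/ exists a b, f = SL a /\ g = SL b /\ a <= b) /\
      (fix go (s r : seq term) : Prop :=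
         match s, r with
         | [::], [::] => True
         | x :: s', y :: r' => tle x y /\ go s' r'
         | _, _ => False
         end) ts us
  | St q, St q' => q = q'
  | _, _ => False
  end.

(** normalized transitions: f(q1,...,qn) -> q and lambda -> q *)
Inductive trans := TRule of sym & seq Q & Q | TLam of L & Q.

Definition wf_trans (r : trans) : bool :=
  match r with
  | TRule f qs _ => (match f with SL _ => false | _ => true end) && (size qs == arity f)
  | TLam _ _ => true
  end.

Inductive step (D : trans -> Prop) : term -> term -> Prop :=
| step_rule f qs q : D (TRule f qs q) -> step D (Node f (map St qs)) (St q)
| step_lam t l q : interp_term t -> D (TLam l q) -> evalt t <= l -> step D t (St q)
| step_ctx f l1 t t' l2 : step D t t' ->
    step D (Node f (l1 ++ t :: l2)) (Node f (l1 ++ t' :: l2)).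

Definition reduces (D : trans -> Prop) : term -> term -> Prop :=
  clos_refl_trans term (step D).

(** language of (F, Q, Qf, D), for an arbitrary (possibly infinite) set D *)
Definition lang (Qf : {set Q}) (D : trans -> Prop) (t : term) : Prop :=
  wf_term t /\ atoms_term t /\
  exists t' q, [/\ tle t t', reduces D t' (St q) & q \in Qf].

Record lta := LTA {
  final : {set Q};
  delta : trans -> Prop;
  delta_finite : exists s : seq trans, forall r, delta r <-> List.In r s;
  delta_wf : forall r, delta r -> wf_trans r }.

Definition propag_new (D : trans -> Prop) (r : trans) : Prop :=
  exists f qs q (ls : seq L),
    [/\ interp_op f, D (TRule f qs q),
        List.Forall2 (fun l q' => reduces D (leaf l) (St q')) ls qs,
        ~ (exists l, D (TLam l q) /\ evalt (Node f (map leaf ls)) <= l) &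
        r = TLam (evalt (Node f (map leaf ls))) q].

Definition propag_step (D D' : trans -> Prop) : Prop :=
  exists r, propag_new D r /\ forall x, D' x <-> D x \/ x = r.

(** E is eval(D): limit of an iteration of propag starting at D, which is
    a fixpoint of propag *)
Definition is_eval (D E : trans -> Prop) : Prop :=
  exists C : nat -> trans -> Prop,
    [/\ forall x, C 0 x <-> D x,
        forall n, propag_step (C n) (C n.+1) \/
                  ((~ exists r, propag_new (C n) r) /\ forall x, C n.+1 x <-> C n x),
        forall x, E x <-> exists n, C n x &
        ~ exists r, propag_new E r].

End LTA.

From HB Require Import structures.
From mathcomp Require Import all_boot all_order.
From Stdlib Require Import Relations.

(* eval(A) only adds transitions to A, and acceptance is monotone in the
   transition set, so every run of A is a run of eval(A). *)

Section Monotonicity.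
Context {disp : Order.disp_t} (L : bLatticeType disp)
  (P O : Type) (arP : P -> nat) (arO : O -> nat) (interp : O -> seq L -> L)
  (Q : finType).

Implicit Types D E : trans L P O Q -> Prop.

Lemma step_mono {D E} :
  (forall r, D r -> E r) -> forall t u, step interp D t u -> step interp E t u.
Proof.
move=> sDE t u; elim=> [f qs q Dr | t0 l q It Dl | f l1 t1 t' l2 _].
- exact: step_rule (sDE _ Dr).
- exact: step_lam It (sDE _ Dl).
- exact: step_ctx.
Qed.

Lemma reduces_mono {D E} :
  (forall r, D r -> E r) -> forall t u, reduces interp D t u -> reduces interp E t u.
Proof.
move=> sDE t u; elim=> [x y xy | x | x y z _ IHxy _ IHyz].
- exact: rt_step (step_mono sDE _ _ xy).
- exact: rt_refl.
- exact: rt_trans IHxy IHyz.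
Qed.

Lemma lang_mono (Qf : {set Q}) {D E} :
  (forall r, D r -> E r) ->
  forall t, lang arP arO interp Qf D t -> lang arP arO interp Qf E t.
Proof.
move=> sDE t [wf_t [atoms_t [t' [q [le_tt' red_t'q Qfq]]]]].
by do 2!split=> //; exists t', q; split=> //; exact: reduces_mono sDE _ _ red_t'q.
Qed.

Lemma is_eval_sub D E : is_eval interp D E -> forall r, D r -> E r.
Proof. by case=> C [C0 _ CE _] r Dr; apply/CE; exists 0; apply/C0. Qed.

End Monotonicity.

Theorem mainTheorem5 (disp : Order.disp_t) (L : bLatticeType disp)
  (P O : Type) (arP : P -> nat) (arO : O -> nat) (interp : O -> seq L -> L)
  (Q : finType) (hL : atomic L) (A : lta L arP arO Q)
  (E : trans L P O Q -> Prop) :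
  is_eval interp (delta A) E ->
  forall t : term L P O Q,
    lang arP arO interp (final A) (delta A) t ->
    lang arP arO interp (final A) E t.
Proof. by move=> /is_eval_sub sDE; apply: lang_mono. Qed.
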